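(* Let $f:[0,1]\to[0,1]$ be a surjective continuous function. If $f$ admits a periodic point of period $m$ for some $m>2$, then $f$ admits a splitting sequence.
   Context: A point $x$ is periodic of period $m$ if $f^m(x)=x$ and $f^i(x)\neq x$ for $0<i<m$. A sequence $(T_n)_{n\in\mathbb N}$ of closed intervals $T_n\subsetneq[0,1]$ (possibly degenerate) is tight if $f(T_{n+1})=T_n$ for every $n$ and $T_n$ is nondegenerate for all sufficiently large $n$. A tight sequence $(T_n)$, $T_n=[l_n,r_n]$, is a splitting sequence admitted by $f$ if there are an infinite set $N\subseteq\mathbb N$ and nondegenerate closed intervals $S_n\subseteq[0,1]$ ($n\in N$) with $S_n\cap T_n\subseteq\{l_n,r_n\}$ and $f(S_n)=f(T_n)$ for all $n\in N$. *)

From Stdlib Require Import Reals.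
Open Scope R_scope.

Definition I01 (x : R) : Prop := 0 <= x <= 1.

Definition cont_on01 (f : R -> R) : Prop :=
  forall x, I01 x -> limit1_in f I01 (f x) x.

Definition maps01 (f : R -> R) : Prop := forall x, I01 x -> I01 (f x).

Definition onto01 (f : R -> R) : Prop :=
  forall y, I01 y -> exists x, I01 x /\ f x = y.

Definition periodic_of_period (f : R -> R) (m : nat) (x : R) : Prop :=
  I01 x /\ Nat.iter m f x = x /\
  (forall i : nat, (0 < i < m)%nat -> Nat.iter i f x <> x).

Definition cint (l r : R) (x : R) : Prop := l <= x <= r.

Definition image_eq (f : R -> R) (a b c d : R) : Prop :=
  forall y, cint c d y <-> exists x, cint a b x /\ f x = y.

Definition proper_subinterval (l r : R) : Prop :=
  0 <= l /\ l <= r /\ r <= 1 /\ ~ (l = 0 /\ r = 1).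

Definition tight (f : R -> R) (l r : nat -> R) : Prop :=
  (forall n, proper_subinterval (l n) (r n)) /\
  (forall n, image_eq f (l (S n)) (r (S n)) (l n) (r n)) /\
  (exists N, forall n, (N <= n)%nat -> l n < r n).

Definition splitting_sequence (f : R -> R) (l r : nat -> R) : Prop :=
  tight f l r /\
  exists (Nset : nat -> Prop) (a b : nat -> R),
    (forall k, exists n, (k <= n)%nat /\ Nset n) /\
    (forall n, Nset n ->
       0 <= a n /\ a n < b n /\ b n <= 1 /\
       (forall x, cint (a n) (b n) x -> cint (l n) (r n) x -> x = l n \/ x = r n) /\
       (forall y, (exists x, cint (a n) (b n) x /\ f x = y) <->
                  (exists x, cint (l n) (r n) x /\ f x = y))).

Definition admits_splitting_sequence (f : R -> R) : Prop :=
  exists l r : nat -> R, splitting_sequence f l r.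

From Stdlib Require Import Reals Lra Lia ClassicalEpsilon.
Open Scope R_scope.

(* Let p < q be the extreme points of the periodic orbit and p', q' orbit points
   with f p' = p and f q' = q, so that f maps the interval J between p' and q'
   onto a superset of [p, q].  If f p <> q, the gap between p and min p' q' is
   nondegenerate; if f p = q then f q = f (f p) <> p because m > 2, and the gap
   between max p' q' and q is nondegenerate.  Either gap [u, v] has endpoints on
   the orbit, meets J at most in an endpoint, and f u lies strictly between p
   and q.  Following the periodic backward orbits of u and v, one pulls the hull
   of f u and f v back to a tight sequence T_n with f (T_(n+1)) = T_n exactly;
   whenever the backward orbits return to u and v, T_n lies in the gap and an
   exact preimage of T_(n-1) inside J splits it. *)

Ltac destruct_minmax :=
  unfold Rmin, Rmax in *;
  repeat match goal with
  | |- context [Rle_dec ?a ?b] => destruct (Rle_dec a b)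
  | H : context [Rle_dec ?a ?b] |- _ => destruct (Rle_dec a b)
  end.

(* f \o clamp01 extends f continuously to R, where Stdlib's IVT and
   epsilon-delta continuity apply. *)
Definition clamp01 (x : R) : R := Rmax 0 (Rmin 1 x).

Lemma clamp01_I01 x : I01 (clamp01 x).
Proof. unfold clamp01, I01; destruct_minmax; lra. Qed.

Lemma clamp01_id x : I01 x -> clamp01 x = x.
Proof. unfold clamp01, I01; destruct_minmax; lra. Qed.

Lemma clamp01_dist x y : Rabs (clamp01 y - clamp01 x) <= Rabs (y - x).
Proof.
  unfold clamp01, Rabs; destruct_minmax;
  repeat match goal with |- context [Rcase_abs ?a] => destruct (Rcase_abs a) end; lra.
Qed.

Lemma continuity_clamp01 f : cont_on01 f -> continuity (fun x => f (clamp01 x)).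
Proof.
  intros Hf x eps Heps.
  destruct (Hf (clamp01 x) (clamp01_I01 x) eps Heps) as [del [Hdel Hnear]].
  exists del; split; [exact Hdel|]. intros y [_ Hy].
  apply Hnear; split; [apply clamp01_I01|].
  simpl in *; unfold R_dist in *. eapply Rle_lt_trans; [apply clamp01_dist | exact Hy].
Qed.

Lemma continuity_eps_delta g z : continuity g -> forall eps, 0 < eps ->
  exists del, 0 < del /\ forall t, Rabs (t - z) < del -> Rabs (g t - g z) < eps.
Proof.
  intros Hg eps Heps. destruct (Hg z eps Heps) as [del [Hdel Hnear]].
  exists del; split; [exact Hdel|]. intros t Ht.
  destruct (Req_dec t z) as [->|Hne].
  - rewrite Rminus_diag, Rabs_R0; exact Heps.
  - apply (Hnear t). split; [split; [constructor | congruence] | exact Ht].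
Qed.

Lemma ivt_between g x1 x2 w : continuity g -> g x1 <= w <= g x2 ->
  exists x, Rmin x1 x2 <= x <= Rmax x1 x2 /\ g x = w.
Proof.
  intros Hg Hw.
  assert (Hgw : continuity (fun t => g t - w)).
  { apply continuity_minus; [exact Hg | apply continuity_const; intros ? ?; reflexivity]. }
  destruct (Rle_dec x1 x2) as [Hle|Hgt].
  - destruct (IVT_cor _ x1 x2 Hgw Hle) as [x [Hx Hgx]]; [nra|].
    exists x. rewrite Rmin_left, Rmax_right by lra. split; [exact Hx | lra].
  - destruct (IVT_cor _ x2 x1 Hgw) as [x [Hx Hgx]]; [lra | nra|].
    exists x. rewrite Rmin_right, Rmax_left by lra. split; [exact Hx | lra].
Qed.

Lemma ivt_on01 f x1 x2 w : cont_on01 f -> I01 x1 -> I01 x2 ->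
  Rmin (f x1) (f x2) <= w <= Rmax (f x1) (f x2) ->
  exists x, Rmin x1 x2 <= x <= Rmax x1 x2 /\ f x = w.
Proof.
  intros Hf H1 H2 Hw.
  pose proof (continuity_clamp01 f Hf) as Hg.
  assert (Hhull : exists x, Rmin x1 x2 <= x <= Rmax x1 x2 /\ f (clamp01 x) = w).
  { rewrite <- (clamp01_id x1 H1), <- (clamp01_id x2 H2) in Hw.
    destruct (Rle_dec (f (clamp01 x1)) (f (clamp01 x2))).
    - apply ivt_between; [exact Hg | destruct_minmax; lra].
    - rewrite Rmin_comm, Rmax_comm. apply ivt_between; [exact Hg | destruct_minmax; lra]. }
  destruct Hhull as [x [Hx Hfx]]. exists x. split; [exact Hx|].
  rewrite clamp01_id in Hfx; [exact Hfx|]. unfold I01 in *; destruct_minmax; lra.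
Qed.

Lemma first_hit g x y d : continuity g -> x <= y -> g x <= d <= g y ->
  exists z, x <= z <= y /\ g z = d /\ forall t, x <= t < z -> g t < d.
Proof.
  intros Hg Hxy Hd.
  destruct (Req_dec (g x) d) as [Hx|Hx].
  { exists x. repeat split; intros; lra. }
  set (E := fun t => x <= t <= y /\ forall s, x <= s <= t -> g s < d).
  assert (HEx : E x) by (split; [lra | intros s Hs; replace s with x by lra; lra]).
  destruct (completeness E) as [z [Hub Hlub]].
  { exists y. intros t [Ht _]. lra. }
  { exists x. exact HEx. }
  assert (Hxz : x <= z) by (apply Hub, HEx).
  assert (Hzy : z <= y) by (apply Hlub; intros t [Ht _]; lra).
  assert (Hbelow : forall s, x <= s < z -> g s < d).
  { intros s Hs. destruct (Rlt_or_le (g s) d) as [|Hs']; [assumption|].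
    enough (z <= s) by lra.
    apply Hlub. intros t [Ht Hlt]. destruct (Rle_or_lt t s); [assumption|].
    specialize (Hlt s). lra. }
  exists z. split; [lra|]. split; [|exact Hbelow].
  destruct (Rtotal_order (g z) d) as [Hlt|[Heq|Hgt]]; [exfalso| exact Heq |exfalso].
  - destruct (continuity_eps_delta g z Hg (d - g z)) as [del [Hdel Hnear]]; [lra|].
    set (t := Rmin y (z + del / 2)).
    assert (Hzt : z < t) by (unfold t; destruct (Req_dec z y); destruct_minmax; subst; lra).
    enough (HEt : E t) by (pose proof (Hub t HEt); lra).
    split; [unfold t; destruct_minmax; lra|].
    intros s Hs. destruct (Rlt_or_le s z); [apply Hbelow; lra|].
    assert (Hsz : Rabs (s - z) < del) by (unfold t in Hs; rewrite Rabs_right; destruct_minmax; lra).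
    apply Hnear, Rabs_def2 in Hsz. lra.
  - destruct (continuity_eps_delta g z Hg (g z - d)) as [del [Hdel Hnear]]; [lra|].
    set (t := Rmax x (z - del / 2)).
    assert (Hxz' : x < z) by (destruct (Req_dec x z); subst; lra).
    assert (Hgt' : g t < d) by (apply Hbelow; unfold t; destruct_minmax; lra).
    assert (Htz : Rabs (t - z) < del) by (unfold t; rewrite Rabs_left1; destruct_minmax; lra).
    apply Hnear, Rabs_def2 in Htz. lra.
Qed.

Lemma last_hit g x y c : continuity g -> x <= y -> g x <= c <= g y ->
  exists w, x <= w <= y /\ g w = c /\ forall t, w < t <= y -> c < g t.
Proof.
  intros Hg Hxy Hc.
  set (h := fun t => - g (- t)).
  assert (Hh : continuity h).
  { apply (continuity_opp (fun t => g (- t))), (continuity_comp Ropp g); [|exact Hg].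
    apply (continuity_opp id), derivable_continuous, derivable_id. }
  destruct (first_hit h (- y) (- x) (- c) Hh) as [z [Hz [Hhz Hbelow]]];
    unfold h; rewrite ?Ropp_involutive; try lra.
  exists (- z). split; [lra|]. split; [unfold h in Hhz; lra|].
  intros t Ht. specialize (Hbelow (- t)). unfold h in Hbelow.
  rewrite Ropp_involutive in Hbelow. enough (- g t < - c) by lra. apply Hbelow. lra.
Qed.

Lemma exact_image_ordered g x y : continuity g -> x <= y -> g x <= g y ->
  exists a b, x <= a <= b /\ b <= y /\
    forall w, g x <= w <= g y <-> exists t, a <= t <= b /\ g t = w.
Proof.
  intros Hg Hxy Hgxy.
  destruct (first_hit g x y (g y) Hg Hxy) as [b [Hb [Hgb Hbelow]]]; [lra|].
  destruct (last_hit g x b (g x) Hg) as [a [Ha [Hga Habove]]]; [lra | lra|].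
  exists a, b. split; [lra|]. split; [lra|]. intros w. split.
  - intros Hw. destruct (ivt_between g a b w Hg) as [t [Ht Hgt]]; [lra|].
    exists t. rewrite Rmin_left, Rmax_right in Ht by lra. split; assumption.
  - intros [t [Ht <-]]. split.
    + destruct (Req_dec t a) as [->|]; [lra|]. enough (g x < g t) by lra. apply Habove. lra.
    + destruct (Req_dec t b) as [->|]; [lra|]. enough (g t < g y) by lra. apply Hbelow. lra.
Qed.

Lemma exact_image g x y : continuity g -> g x <= g y ->
  exists a b, Rmin x y <= a <= b /\ b <= Rmax x y /\
    forall w, g x <= w <= g y <-> exists t, a <= t <= b /\ g t = w.
Proof.
  intros Hg Hgxy. destruct (Rle_dec x y) as [Hxy|Hyx].
  - rewrite Rmin_left, Rmax_right by lra. apply exact_image_ordered; assumption.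
  - rewrite Rmin_right, Rmax_left by lra.
    destruct (exact_image_ordered (fun t => - g t) y x) as [a [b [Ha [Hb Hab]]]];
      [apply continuity_opp, Hg | lra | lra |].
    exists a, b. split; [exact Ha|]. split; [exact Hb|]. intros w.
    specialize (Hab (- w)). split.
    + intros Hw. destruct (proj1 Hab) as [t [Ht Hgt]]; [lra|]. exists t. split; [exact Ht | lra].
    + intros [t [Ht <-]]. enough (- g y <= - g t <= - g x) by lra. apply Hab. eauto.
Qed.

Lemma exact_image_on01 f a b c d : cont_on01 f -> 0 <= a -> b <= 1 -> c < d ->
  (forall w, c <= w <= d -> exists x, a <= x <= b /\ f x = w) ->
  exists a' b', a <= a' /\ a' < b' /\ b' <= b /\ image_eq f a' b' c d.
Proof.
  intros Hf Ha Hb Hcd Hcover.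
  destruct (Hcover c) as [x [Hx Hfx]]; [lra|].
  destruct (Hcover d) as [y [Hy Hfy]]; [lra|].
  set (g := fun t => f (clamp01 t)).
  assert (Hgf : forall t, a <= t <= b -> g t = f t)
    by (intros t Ht; unfold g; rewrite clamp01_id; [reflexivity | unfold I01; lra]).
  destruct (exact_image g x y) as [a' [b' [Ha' [Hb' Himg]]]];
    [apply continuity_clamp01, Hf | rewrite !Hgf; lra|].
  rewrite !Hgf, Hfx, Hfy in Himg by assumption.
  assert (Hne : a' < b').
  { destruct (proj1 (Himg c)) as [s [Hs Hgs]]; [lra|].
    destruct (proj1 (Himg d)) as [t [Ht Hgt]]; [lra|].
    destruct (Req_dec a' b'); [|lra].
    replace t with s in Hgt by lra. lra. }
  assert (Hsub : a <= a' /\ b' <= b) by (destruct_minmax; lra).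
  exists a', b'. split; [apply Hsub|]. split; [exact Hne|]. split; [apply Hsub|].
  intros w. unfold cint. rewrite Himg. split.
  - intros [t [Ht Hgt]]. exists t. split; [exact Ht|]. rewrite <- Hgf; [exact Hgt | lra].
  - intros [t [Ht Hft]]. exists t. split; [exact Ht|]. rewrite Hgf; [exact Hft | lra].
Qed.

Lemma iter_mul_period {A : Type} (g : A -> A) m u j :
  Nat.iter m g u = u -> Nat.iter (m * j) g u = u.
Proof.
  intros Hu. induction j as [|j IH]; [rewrite Nat.mul_0_r; reflexivity|].
  rewrite Nat.mul_succ_r, Nat.iter_add, Hu. exact IH.
Qed.

(* For u of period dividing S k, this is a backward orbit of g u:
   g^(1 + k n) u = g^(-n) (g u) along the cycle of u. *)
Definition backward_orbit {A : Type} (g : A -> A) (k : nat) (u : A) (n : nat) : A :=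
  Nat.iter (S (k * n)) g u.

Section BackwardOrbit.

Variables (A : Type) (g : A -> A) (k : nat) (u : A).
Hypothesis u_periodic : Nat.iter (S k) g u = u.

Lemma backward_orbit_O : backward_orbit g k u O = g u.
Proof. unfold backward_orbit. rewrite Nat.mul_0_r. reflexivity. Qed.

Lemma backward_orbit_step n : g (backward_orbit g k u (S n)) = backward_orbit g k u n.
Proof.
  unfold backward_orbit. change (g (Nat.iter _ g u)) with (Nat.iter (S (S (k * S n))) g u).
  replace (S (S (k * S n))) with (S (k * n) + S k)%nat by lia.
  rewrite Nat.iter_add, u_periodic. reflexivity.
Qed.

Lemma backward_orbit_return j : backward_orbit g k u (S (S k * j)) = u.
Proof.
  unfold backward_orbit. replace (S (k * S (S k * j))) with (S k * S (k * j))%nat by lia.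
  apply iter_mul_period, u_periodic.
Qed.

Lemma backward_orbit_recover n : Nat.iter (k * S (k * n)) g (backward_orbit g k u n) = u.
Proof.
  unfold backward_orbit. rewrite <- Nat.iter_add.
  replace (k * S (k * n) + S (k * n))%nat with (S k * S (k * n))%nat by lia.
  apply iter_mul_period, u_periodic.
Qed.

End BackwardOrbit.

Lemma finite_argmin (h : nat -> R) n :
  exists i, (i <= n)%nat /\ forall j, (j <= n)%nat -> h i <= h j.
Proof.
  induction n as [|n [i [Hi Hmin]]].
  - exists O. split; [lia|]. intros j Hj. replace j with O by lia. lra.
  - destruct (Rle_dec (h (S n)) (h i)).
    + exists (S n). split; [lia|]. intros j Hj.
      destruct (Nat.eq_dec j (S n)) as [->|]; [lra|]. specialize (Hmin j ltac:(lia)). lra.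
    + exists i. split; [lia|]. intros j Hj.
      destruct (Nat.eq_dec j (S n)) as [->|]; [lra|]. apply Hmin. lia.
Qed.

Lemma periodic_seq_attains_min (h : nat -> R) m :
  (0 < m)%nat -> (forall j, h (j + m)%nat = h j) -> exists i, forall j, h i <= h j.
Proof.
  intros Hm Hper.
  assert (Hmod : forall j, h j = h (j mod m)).
  { assert (Hrep : forall q r, h (r + q * m)%nat = h r).
    { induction q as [|q IH]; intros r; [f_equal; lia|].
      replace (r + S q * m)%nat with (r + q * m + m)%nat by lia. rewrite Hper. apply IH. }
    intros j. rewrite (Nat.div_mod_eq j m) at 1. rewrite Nat.add_comm, Nat.mul_comm. apply Hrep. }
  destruct (finite_argmin h (pred m)) as [i [_ Hi]].
  exists i. intros j. rewrite (Hmod j). apply Hi.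
  pose proof (Nat.mod_upper_bound j m ltac:(lia)). lia.
Qed.

Lemma periodic_seq_attains_max (h : nat -> R) m :
  (0 < m)%nat -> (forall j, h (j + m)%nat = h j) -> exists i, forall j, h j <= h i.
Proof.
  intros Hm Hper.
  destruct (periodic_seq_attains_min (fun j => - h j) m Hm) as [i Hi];
    [intros j; rewrite Hper; reflexivity|].
  exists i. intros j. specialize (Hi j). lra.
Qed.

Lemma iter_I01 f x j : maps01 f -> I01 x -> I01 (Nat.iter j f x).
Proof. intros Hf Hx. induction j as [|j IH]; [exact Hx | apply Hf, IH]. Qed.

Definition orbit_point (f : R -> R) (x0 s : R) : Prop := exists i, s = Nat.iter i f x0.

Section Orbit.

Variables (f : R -> R) (m : nat) (x0 : R).
Hypothesis x0_periodic : periodic_of_period f m x0.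

Lemma orbit_point_iter s j : orbit_point f x0 s -> orbit_point f x0 (Nat.iter j f s).
Proof. intros [i ->]. exists (j + i)%nat. symmetry. apply Nat.iter_add. Qed.

Lemma orbit_point_I01 s : maps01 f -> orbit_point f x0 s -> I01 s.
Proof. intros Hf [i ->]. apply iter_I01, x0_periodic. exact Hf. Qed.

Lemma orbit_point_periodic s : orbit_point f x0 s -> Nat.iter m f s = s.
Proof.
  destruct x0_periodic as (_ & Hret & _). intros [i ->].
  rewrite <- Nat.iter_add, Nat.add_comm, Nat.iter_add, Hret. reflexivity.
Qed.

Lemma orbit_point_has_preimage s : (0 < m)%nat -> orbit_point f x0 s ->
  exists s', orbit_point f x0 s' /\ f s' = s.
Proof.
  intros Hm Hs. exists (Nat.iter (pred m) f s). split; [apply orbit_point_iter, Hs|].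
  change (Nat.iter (S (pred m)) f s = s). replace (S (pred m)) with m by lia.
  apply orbit_point_periodic, Hs.
Qed.

Lemma orbit_point_iter_ne s k : (0 < k < m)%nat -> orbit_point f x0 s -> Nat.iter k f s <> s.
Proof.
  destruct x0_periodic as (_ & Hret & Hmin).
  intros Hk [i ->] E. apply (Hmin k Hk).
  rewrite <- (iter_mul_period f m x0 i Hret) at 1. rewrite <- Nat.iter_add.
  transitivity (Nat.iter ((m - 1) * i) f (Nat.iter k f (Nat.iter i f x0))).
  - rewrite <- !Nat.iter_add. f_equal. nia.
  - rewrite E, <- Nat.iter_add. replace ((m - 1) * i + i)%nat with (m * i)%nat by nia.
    apply iter_mul_period, Hret.
Qed.

End Orbit.

Lemma dependent_choice {A : Type} (P : nat -> A -> Prop) (Rel : nat -> A -> A -> Prop) x0 :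
  P O x0 -> (forall n x, P n x -> exists y, P (S n) y /\ Rel n x y) ->
  exists s : nat -> A, s O = x0 /\ forall n, P n (s n) /\ Rel n (s n) (s (S n)).
Proof.
  intros H0 Hstep.
  set (next := fun n x => epsilon (inhabits x0) (fun y => P (S n) y /\ Rel n x y)).
  set (s := fix s n := match n with O => x0 | S n' => next n' (s n') end).
  assert (Hnext : forall n, P n (s n) -> P (S n) (s (S n)) /\ Rel n (s n) (s (S n)))
    by (intros n Hn; apply epsilon_spec, Hstep, Hn).
  assert (HP : forall n, P n (s n)) by (induction n; [exact H0 | apply Hnext; assumption]).
  exists s. split; [reflexivity|]. intros n. split; [apply HP | apply Hnext, HP].
Qed.

Section Splitting.

Variable f : R -> R.
Hypothesis f_cont : cont_on01 f.
Hypothesis f_maps : maps01 f.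
Hypothesis f_onto : onto01 f.

Lemma exact_pullback_chain (lo hi : nat -> R) :
  (forall n, 0 <= lo n /\ hi n <= 1) -> lo O < hi O ->
  (forall n w, lo n <= w <= hi n -> exists x, lo (S n) <= x <= hi (S n) /\ f x = w) ->
  exists l r : nat -> R, l O = lo O /\ r O = hi O /\
    forall n, (lo n <= l n /\ l n < r n /\ r n <= hi n) /\
              image_eq f (l (S n)) (r (S n)) (l n) (r n).
Proof.
  intros Hbd H0 Hcover.
  destruct (dependent_choice
              (fun n T => lo n <= fst T /\ fst T < snd T /\ snd T <= hi n)
              (fun _ T T' => image_eq f (fst T') (snd T') (fst T) (snd T))
              (lo O, hi O)) as [T [HT0 HT]].
  - simpl; lra.
  - intros n [l r] Hlr; simpl in Hlr.
    destruct (exact_image_on01 f (lo (S n)) (hi (S n)) l r f_cont) as [l' [r' Hlr']];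
      try apply Hbd; try lra.
    + intros w Hw. apply Hcover. lra.
    + exists (l', r'). simpl. tauto.
  - exists (fun n => fst (T n)), (fun n => snd (T n)). rewrite HT0. simpl.
    split; [reflexivity|]. split; [reflexivity|]. exact HT.
Qed.

Lemma image_eq_full c d : image_eq f 0 1 c d -> c = 0 /\ d = 1.
Proof.
  intros Himg.
  assert (Hin : forall y, I01 y -> cint c d y).
  { intros y Hy. apply Himg. destruct (f_onto y Hy) as [x Hx]. exists x. exact Hx. }
  assert (Hout : forall y, cint c d y -> I01 y).
  { intros y Hy. destruct (proj1 (Himg y) Hy) as [x [Hx <-]]. apply f_maps, Hx. }
  assert (H0 : cint c d 0) by (apply Hin; unfold I01; lra).
  assert (H1 : cint c d 1) by (apply Hin; unfold I01; lra).
  unfold cint in H0, H1.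
  assert (Hc : I01 c) by (apply Hout; unfold cint; lra).
  assert (Hd : I01 d) by (apply Hout; unfold cint; lra).
  unfold I01 in Hc, Hd. lra.
Qed.

Lemma tight_of_chain (l r : nat -> R) :
  (forall n, 0 <= l n /\ l n < r n /\ r n <= 1) -> ~ (l O = 0 /\ r O = 1) ->
  (forall n, image_eq f (l (S n)) (r (S n)) (l n) (r n)) ->
  tight f l r.
Proof.
  intros Hlr H0 Himg. split; [|split].
  - intros n. unfold proper_subinterval.
    destruct (Hlr n) as [Hl [Hlt Hr]]. repeat split; try lra.
    induction n as [|n IH]; [exact H0|].
    intros [El Er]. apply IH; [apply Hlr | apply Hlr | apply Hlr|].
    apply image_eq_full. rewrite <- El, <- Er. apply Himg.
  - exact Himg.
  - exists O. intros n _. apply Hlr.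
Qed.

Lemma splitting_of_cover (l r : nat -> R) a b :
  tight f l r -> 0 <= a -> b <= 1 ->
  (forall n w, l n <= w <= r n -> exists x, a <= x <= b /\ f x = w) ->
  (forall k, exists n, (k <= n)%nat /\
     forall x, a <= x <= b -> l n <= x <= r n -> x = l n \/ x = r n) ->
  splitting_sequence f l r.
Proof.
  intros Htight Ha Hb Hcover Hoften.
  destruct Htight as (Hprop & Himg & N & HN).
  (* Only n > N is used, where T_(n-1) is nondegenerate; (0, 0) is a dummy. *)
  assert (Hsplit : forall n, exists J : R * R, (N < n)%nat ->
            a <= fst J /\ fst J < snd J /\ snd J <= b /\
            image_eq f (fst J) (snd J) (l (pred n)) (r (pred n))).
  { intros n. destruct (Nat.lt_ge_cases N n) as [Hn|Hn].
    - destruct (exact_image_on01 f a b (l (pred n)) (r (pred n)) f_cont Ha Hb)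
        as [a' [b' Hab']]; [apply HN; lia | apply Hcover|].
      exists (a', b'). intros _. exact Hab'.
    - exists (0, 0). lia. }
  destruct (choice _ Hsplit) as [J HJ].
  split; [split; [exact Hprop | split; [exact Himg | exists N; exact HN]]|].
  exists (fun n => (N < n)%nat /\
            forall x, a <= x <= b -> l n <= x <= r n -> x = l n \/ x = r n),
         (fun n => fst (J n)), (fun n => snd (J n)).
  split.
  - intros k. destruct (Hoften (S (k + N))) as [n [Hn Hdisj]]. exists n. repeat split; auto; lia.
  - intros n [Hn Hdisj]. destruct (HJ n Hn) as (Ha' & Hab' & Hb' & HSimg).
    repeat split; try lra.
    + intros x Hx Hx'. apply Hdisj; [unfold cint in *; lra | exact Hx'].
    + intros [x [Hx Hfx]].
      destruct n as [|n']; [lia|]. apply Himg, HSimg. eauto.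
    + intros [x [Hx Hfx]].
      destruct n as [|n']; [lia|]. apply HSimg, Himg. eauto.
Qed.

Lemma splitting_of_periodic_gap k u v P Q a b :
  Nat.iter (S k) f u = u -> Nat.iter (S k) f v = v -> u <> v ->
  0 <= P -> Q <= 1 ->
  (forall j, P <= Nat.iter j f u <= Q) -> (forall j, P <= Nat.iter j f v <= Q) ->
  P < f u < Q -> 0 <= a -> b <= 1 ->
  (forall w, P <= w <= Q -> exists x, a <= x <= b /\ f x = w) ->
  (forall x, a <= x <= b -> Rmin u v <= x <= Rmax u v -> x = Rmin u v \/ x = Rmax u v) ->
  admits_splitting_sequence f.
Proof.
  intros Hu Hv Huv HP HQ HuPQ HvPQ Hfu Ha Hb Hcover Hdisj.
  set (y := backward_orbit f k u). set (z := backward_orbit f k v).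
  assert (HyPQ : forall n, P <= y n <= Q) by (intros n; apply HuPQ).
  assert (HzPQ : forall n, P <= z n <= Q) by (intros n; apply HvPQ).
  assert (Hyz : forall n, y n <> z n).
  { intros n E. apply Huv.
    rewrite <- (backward_orbit_recover _ f k u Hu n), <- (backward_orbit_recover _ f k v Hv n).
    fold y z. rewrite E. reflexivity. }
  set (lo := fun n => Rmin (y n) (z n)). set (hi := fun n => Rmax (y n) (z n)).
  assert (Hlohi : forall n, P <= lo n /\ lo n < hi n /\ hi n <= Q).
  { intros n. specialize (HyPQ n). specialize (HzPQ n). specialize (Hyz n).
    unfold lo, hi. destruct_minmax; lra. }
  destruct (exact_pullback_chain lo hi) as [l [r [Hl0 [Hr0 Hchain]]]].
  - intros n. specialize (Hlohi n). lra.
  - apply Hlohi.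
  - intros n w Hw. apply ivt_on01; [exact f_cont | | |].
    1,2: unfold I01; specialize (HyPQ (S n)); specialize (HzPQ (S n)); lra.
    unfold y, z. rewrite !backward_orbit_step by assumption. exact Hw.
  - assert (Htight : tight f l r).
    { apply tight_of_chain; [| | apply Hchain].
      - intros n. destruct (Hchain n) as [Hn _]. specialize (Hlohi n). lra.
      - rewrite Hl0, Hr0. unfold lo, hi, y, z. rewrite !backward_orbit_O by assumption.
        specialize (HvPQ 1%nat). simpl in HvPQ. destruct_minmax; lra. }
    exists l, r. apply (splitting_of_cover l r a b Htight Ha Hb).
    + intros n w Hw. apply Hcover.
      destruct (Hchain n) as [Hn _]. specialize (Hlohi n). lra.
    + (* at n = 1 + (k + 1) j the backward orbits are back at u and v *)
      intros j. exists (S (S k * j)). split; [lia|].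
      destruct (Hchain (S (S k * j))) as [Hn _].
      unfold lo, hi, y, z in Hn. rewrite !backward_orbit_return in Hn by assumption.
      intros x Hx Hx'. destruct (Hdisj x Hx) as [E|E]; [lra | left | right]; lra.
Qed.

Section ExtremalOrbit.

Variables (m : nat) (x0 : R).
Hypothesis x0_periodic : periodic_of_period f m x0.
Variables p q : R.
Hypothesis p_orbit : orbit_point f x0 p.
Hypothesis q_orbit : orbit_point f x0 q.
Hypothesis p_orbit_min : forall s, orbit_point f x0 s -> p <= s.
Hypothesis q_orbit_max : forall s, orbit_point f x0 s -> s <= q.

Lemma orbit_gap_splitting u v a b : (0 < m)%nat ->
  orbit_point f x0 u -> orbit_point f x0 v -> u <> v ->
  p < f u < q -> 0 <= a -> b <= 1 ->
  (forall w, p <= w <= q -> exists x, a <= x <= b /\ f x = w) ->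
  (forall x, a <= x <= b -> Rmin u v <= x <= Rmax u v -> x = Rmin u v \/ x = Rmax u v) ->
  admits_splitting_sequence f.
Proof.
  intros Hm Hu Hv Huv Hfu Ha Hb Hcover Hdisj.
  pose proof (orbit_point_I01 f m x0 x0_periodic p f_maps p_orbit) as Hp.
  pose proof (orbit_point_I01 f m x0 x0_periodic q f_maps q_orbit) as Hq.
  unfold I01 in Hp, Hq.
  apply (splitting_of_periodic_gap (pred m) u v p q a b); try assumption; try lra.
  1,2: replace (S (pred m)) with m by lia; apply (orbit_point_periodic f m x0 x0_periodic); assumption.
  1,2: intros j; split; [apply p_orbit_min | apply q_orbit_max]; apply orbit_point_iter; assumption.
Qed.

Lemma orbit_splitting : (2 < m)%nat -> admits_splitting_sequence f.
Proof.
  intros Hm.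
  assert (Hbd : forall s, orbit_point f x0 s -> 0 <= p <= s /\ s <= q <= 1).
  { intros s Hs. pose proof (orbit_point_I01 f m x0 x0_periodic p f_maps p_orbit).
    pose proof (orbit_point_I01 f m x0 x0_periodic q f_maps q_orbit).
    unfold I01 in *. split; split; try lra; [apply p_orbit_min | apply q_orbit_max]; exact Hs. }
  assert (Hne : forall s k, orbit_point f x0 s -> (0 < k < m)%nat -> Nat.iter k f s <> s)
    by (intros s k Hs Hk; exact (orbit_point_iter_ne f m x0 x0_periodic s k Hk Hs)).
  destruct (orbit_point_has_preimage f m x0 x0_periodic p ltac:(lia) p_orbit) as [p' [Hp' Hfp']].
  destruct (orbit_point_has_preimage f m x0 x0_periodic q ltac:(lia) q_orbit) as [q' [Hq' Hfq']].
  pose proof (Hbd p' Hp') as Hp'_bd. pose proof (Hbd q' Hq') as Hq'_bd.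
  pose proof (Hbd (f p) (orbit_point_iter f x0 p 1 p_orbit)) as Hfp_bd.
  pose proof (Hbd (f q) (orbit_point_iter f x0 q 1 q_orbit)) as Hfq_bd.
  assert (Hfp : f p <> p) by (apply (Hne p 1%nat); [assumption | lia]).
  assert (Hfq : f q <> q) by (apply (Hne q 1%nat); [assumption | lia]).
  (* the only use of m > 2 *)
  assert (Hffp : f (f p) <> p) by (apply (Hne p 2%nat); [assumption | lia]).
  assert (Hcover : forall w, p <= w <= q -> exists x, Rmin p' q' <= x <= Rmax p' q' /\ f x = w).
  { intros w Hw. apply ivt_on01; [exact f_cont | unfold I01; lra .. |].
    rewrite Hfp', Hfq'. destruct_minmax; lra. }
  destruct (Req_dec (f p) q) as [Hpq|Hpq].
  - assert (p' <> q) by (intros ->; apply Hffp; rewrite Hpq; exact Hfp').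
    assert (q' <> q) by (intros ->; apply Hfq; exact Hfq').
    assert (f q <> p) by (rewrite <- Hpq; exact Hffp).
    apply (orbit_gap_splitting q (Rmax p' q') (Rmin p' q') (Rmax p' q')); try assumption;
      try (destruct_minmax; lra); try lia.
    + apply Rmax_case; assumption.
    + intros x Hx Hx'. destruct_minmax; lra.
  - assert (p' <> p) by (intros ->; apply Hfp; exact Hfp').
    assert (q' <> p) by (intros ->; apply Hpq; exact Hfq').
    apply (orbit_gap_splitting p (Rmin p' q') (Rmin p' q') (Rmax p' q')); try assumption;
      try (destruct_minmax; lra); try lia.
    + apply Rmin_case; assumption.
    + intros x Hx Hx'. destruct_minmax; lra.
Qed.

End ExtremalOrbit.

End Splitting.

Theorem lemma3p8 (f : R -> R) :
  cont_on01 f -> maps01 f -> onto01 f ->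
  (exists (m : nat) (x : R), (2 < m)%nat /\ periodic_of_period f m x) ->
  admits_splitting_sequence f.
Proof.
  intros Hc Hm Ho [m [x0 [Hm2 Hx0]]].
  set (o := fun i => Nat.iter i f x0).
  assert (Hper : forall j, o (j + m)%nat = o j).
  { intros j. unfold o. rewrite Nat.iter_add. f_equal. apply Hx0. }
  destruct (periodic_seq_attains_min o m ltac:(lia) Hper) as [ip Hp].
  destruct (periodic_seq_attains_max o m ltac:(lia) Hper) as [iq Hq].
  apply (orbit_splitting f Hc Hm Ho m x0 Hx0 (o ip) (o iq)); try assumption.
  - exists ip. reflexivity.
  - exists iq. reflexivity.
  - intros s [j ->]. apply Hp.
  - intros s [j ->]. apply Hq.
Qed.
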